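(* Let $G=(V,E)$ be a network, $s,t\in V$, and $S\in[S_{min},1]$ any survivability bound. Let $\mathbb{L}=\bigcap_{\pi\in L^{(s,t)}}\pi$, where $L^{(s,t)}$ is the set of weight-shortest $s$–$t$ paths. Then there is a survivable connection $(\pi_1,\pi_2)$ that is an optimal solution of the CT-Constrained Survivability Min-QoS problem with bound $S$ and satisfies $\pi_1\cap\pi_2\subseteq\mathbb{L}$.
   Context: A network is a directed graph $G=(V,E)$ with $M=|E|$. Each link $e$ has failure probability $p_e\in(0,p_{max}]$ with $p_{max}<1$, and positive weight $w_e$. Let $S_{min}=(1-p_{max})^M$. It is assumed that $t$ is reachable from $s$. Paths are identified with link sets, and $W(\pi)=\sum_{e\in\pi}w_e$. A survivable connection is a pair $(\pi_1,\pi_2)$ of simple $s$–$t$ paths; the two paths may coincide. Its critical links are $\pi_1\cap\pi_2$. Its survivability level is $\prod_{e\in\pi_1\cap\pi_2}(1-p_e)$, equal to $1$ if empty. A weight-shortest $s$–$t$ path is an $s$–$t$ path of minimum weight. CT-CSMQ problem: minimize $W(\pi_1)+W(\pi_2)$ over survivable connections with survivability level $\ge S$. *)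

From HB Require Import structures.
From mathcomp Require Import all_boot all_order all_algebra.
Set Implicit Arguments. Unset Strict Implicit. Unset Printing Implicit Defensive.
Import Order.TTheory GRing.Theory Num.Theory.
Local Open Scope ring_scope.

Section Net.
Variables (V E : finType) (src dst : E -> V).

Fixpoint walk (x y : V) (es : seq E) : bool :=
  match es with
  | [::] => x == y
  | e :: es' => (src e == x) && walk (dst e) y es'
  end.

Definition simple_path_seq (s t : V) (es : seq E) : bool :=
  walk s t es && uniq (s :: map dst es).

(* A path is identified with its link set. *)
Definition st_path (s t : V) (A : {set E}) : Prop :=
  exists es : seq E, simple_path_seq s t es /\ A = [set e | e \in es].

Variable R : realFieldType.

Definition weight (w : E -> R) (A : {set E}) : R := \sum_(e in A) w e.

Definition shortest_path (w : E -> R) (s t : V) (A : {set E}) : Prop :=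
  st_path s t A /\ forall B, st_path s t B -> weight w A <= weight w B.

Definition surv_level (p : E -> R) (P1 P2 : {set E}) : R :=
  \prod_(e in P1 :&: P2) (1 - p e).

Definition feasible (p : E -> R) (s t : V) (S : R) (P1 P2 : {set E}) : Prop :=
  st_path s t P1 /\ st_path s t P2 /\ S <= surv_level p P1 P2.

Definition ctcsmq_optimal (p w : E -> R) (s t : V) (S : R) (P1 P2 : {set E}) : Prop :=
  feasible p s t S P1 P2 /\
  forall Q1 Q2, feasible p s t S Q1 Q2 ->
    weight w P1 + weight w P2 <= weight w Q1 + weight w Q2.

End Net.

From HB Require Import structures.
From mathcomp Require Import all_boot all_order all_algebra.
From mathcomp Require Import boolp.
From mathcomp Require Import lra.
Import Order.TTheory GRing.Theory Num.Theory.
Set Implicit Arguments. Unset Strict Implicit. Unset Printing Implicit Defensive.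

(* Among the optimal connections take one with the fewest critical links, and suppose that a
   critical link e misses a weight-shortest path q.  Let u be the last vertex of q lying on the two
   paths before e, and v the first later vertex of q lying on them after e.  The segment of q from
   u to v shares no link with either path and, being part of a shortest path, weighs no more than
   the detour from u through e to v along the paths.  Splicing it in gives one s-t walk through the
   segment and one through e made of the two unused halves: their total weight has not grown and
   their common links are critical links other than e.  Shortcutting both walks to simple paths
   preserves this, and fewer critical links can only raise the survivability, so the result is an
   optimal connection with fewer critical links. *)

Lemma uniq_cat_cons (T : eqType) (a b : seq T) x :
  uniq (a ++ x :: b) -> x \notin a ++ b /\ {in a, forall y, y \notin b}.
Proof.
rewrite uniq_catC /= mem_cat orbC -mem_cat cat_uniq => /andP [-> /and3P [_ /hasPn nba _]].
by split=> // y /nba.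
Qed.

Section Walks.
Variables (V E : finType) (src dst : E -> V).
Implicit Types (x y u : V) (g h : E) (es : seq E).

Local Notation walk := (walk src dst).
Local Notation simple_path_seq := (simple_path_seq src dst).

Lemma walk_cat x z y es1 es2 :
  walk x z es1 -> walk z y es2 -> walk x y (es1 ++ es2).
Proof.
elim: es1 x => [|g es1 IH] x /=; first by move=> /eqP ->.
by case/andP=> -> /IH; apply.
Qed.

Lemma walk_catP x y es1 es2 :
  walk x y (es1 ++ es2) -> exists2 z, walk x z es1 & walk z y es2.
Proof.
elim: es1 x => [|g es1 IH] x /=; first by exists x.
by case/andP=> gx /IH [z w1 w2]; exists z; rewrite ?gx.
Qed.

Lemma walk_cat_cons x y es1 g es2 :
  walk x y (es1 ++ g :: es2) -> walk x (src g) es1 /\ walk (dst g) y es2.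
Proof. by case/walk_catP=> z w1 /= /andP [/eqP gz w2]; rewrite gz. Qed.

Lemma simple_path_uniq x y es : simple_path_seq x y es -> uniq es.
Proof. by case/andP=> _ /= /andP [_ /map_uniq]. Qed.

Lemma walk_rcons x y es g : walk x y (rcons es g) = walk x (src g) es && (dst g == y).
Proof.
elim: es x => [|g' es IH] x /=; last by rewrite IH andbA.
by rewrite eq_sym.
Qed.

Lemma walk_mem_end x y es : walk x y es -> y \in x :: map dst es.
Proof.
elim: es x => [|g es IH] x /=; first by move=> /eqP ->; rewrite mem_head.
by case/andP=> _ /IH yin; rewrite inE yin orbT.
Qed.

Lemma walk_mem_src x y es h : walk x y es -> h \in es -> src h \in x :: map dst es.
Proof.
elim: es x => [|g es IH] x //= /andP [/eqP gx wes].
rewrite inE => /predU1P [->|/(IH _ wes)]; first by rewrite gx mem_head.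
by rewrite !inE => /orP [->|->]; rewrite !orbT.
Qed.

Lemma walk_split_at x y es u : walk x y es -> u \in x :: map dst es ->
  exists es1 es2, [/\ es = es1 ++ es2, walk x u es1 & walk u y es2].
Proof.
elim: es x => [|g es IH] x /=.
  by move=> /eqP -> /[!inE] /eqP ->; exists [::], [::]; rewrite /= eqxx.
case/andP=> /eqP gx wes /[!inE] /orP [/eqP ->|uin].
  by exists [::], (g :: es); rewrite /= gx eqxx wes.
have [es1 [es2 [-> w1 w2]]] := IH _ wes uin.
by exists (g :: es1), es2; rewrite /= gx eqxx w1.
Qed.

Lemma walk_first_hit (Q : pred V) x y es : walk x y es -> Q y ->
  exists u es1 es2, [/\ es = es1 ++ es2, walk x u es1, walk u y es2, Q u
                      & {in es1, forall h, ~~ Q (src h)}].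
Proof.
elim: es x => [|g es IH] x /=.
  by move=> /eqP -> Qy; exists y, [::], [::]; rewrite /= eqxx.
case/andP=> /eqP gx wes Qy; case Qx: (Q x).
  by exists x, [::], (g :: es); rewrite /= gx eqxx wes.
have [u [es1 [es2 [-> w1 w2 Qu notQ]]]] := IH _ wes Qy.
exists u, (g :: es1), es2; split; rewrite /= ?gx ?eqxx //.
by move=> h /[!inE] /predU1P [->|/notQ]; rewrite ?gx ?Qx.
Qed.

Lemma walk_last_hit (Q : pred V) x y es : walk x y es -> Q x ->
  exists u es1 es2, [/\ es = es1 ++ es2, walk x u es1, walk u y es2, Q u
                      & {in es2, forall h, ~~ Q (dst h)}].
Proof.
elim/last_ind: es y => [|es g IH] y /=.
  by move=> /eqP <- Qx; exists x, [::], [::]; rewrite /= !eqxx.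
rewrite walk_rcons => /andP [wes /eqP gy] Qx; case Qy: (Q y).
  by exists y, (rcons es g), [::]; rewrite cats0 walk_rcons wes gy /= !eqxx.
have [u [es1 [es2 [-> w1 w2 Qu notQ]]]] := IH _ wes Qx.
exists u, es1, (rcons es2 g); split; rewrite ?rcons_cat ?walk_rcons ?w2 ?gy ?eqxx //.
by move=> h /[!mem_rcons] /[!inE] /predU1P [->|/notQ]; rewrite ?gy ?Qy.
Qed.

Lemma walk_shortcut x y es : walk x y es ->
  exists2 es', simple_path_seq x y es' & {subset es' <= es}.
Proof.
elim: es x => [|g es IH] x /=.
  by move=> /eqP ->; exists [::]; rewrite /simple_path_seq /= ?eqxx.
case/andP=> /eqP gx wes; have [es' /andP [wes' ues'] sub] := IH _ wes.
have sub' : {subset es' <= g :: es} by move=> h /sub; rewrite inE orbC => ->.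
case: (boolP (x \in dst g :: map dst es')) => [/[!inE] /predU1P [xg|/mapP [h hin xh]]|xnin].
- by exists es'; rewrite // /simple_path_seq xg wes' ues'.
- case/splitPr: hin wes' ues' sub' => es1 es2 wes' ues' sub'.
  exists es2; last by move=> h' h'in; apply: sub'; rewrite mem_cat inE h'in !orbT.
  have [z _ /= /andP [_ wes2]] := walk_catP wes'.
  move: ues'; rewrite /= map_cat cat_uniq => /andP [_ /and3P [_ _]].
  by rewrite /simple_path_seq xh wes2 => ->.
- exists (g :: es'); last by move=> h /[!inE] /predU1P [->|/sub ->]; rewrite ?eqxx ?orbT.
  by rewrite /simple_path_seq /= gx eqxx wes' xnin.
Qed.

End Walks.

Local Open Scope ring_scope.

Section Weights.
Variables (E : finType) (R : realFieldType) (w : E -> R).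
Implicit Types (A B : {set E}) (es : seq E).

Lemma weight_mem_seq es : uniq es -> weight w [set h | h \in es] = \sum_(h <- es) w h.
Proof. by move=> ues; rewrite /weight big_uniq //; apply: eq_bigl => h; rewrite inE. Qed.

Lemma weight_mem_cat_cons a x b : uniq (a ++ x :: b) ->
  weight w [set h | h \in a ++ x :: b] = \sum_(h <- a) w h + w x + \sum_(h <- b) w h.
Proof. by move=> uaxb; rewrite weight_mem_seq // big_cat big_cons /= addrA. Qed.

Hypothesis w_ge0 : forall e, 0 <= w e.

Lemma weight_subset A B : A \subset B -> weight w A <= weight w B.
Proof.
move=> AB; rewrite /weight [leRHS](big_setID A) /= (setIidPr AB).
by rewrite lerDl sumr_ge0.
Qed.

Lemma weight_mem_seq_le es : weight w [set h | h \in es] <= \sum_(h <- es) w h.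
Proof.
elim: es => [|g es IH]; first by rewrite /weight big_nil big_pred0 // => h; rewrite inE.
have -> : [set h | h \in g :: es] = g |: [set h | h \in es].
  by apply/setP=> h; rewrite !inE.
rewrite big_cons; case: (boolP (g \in [set h | h \in es])) => [g_in|g_notin].
  by rewrite (setUidPr _) ?sub1set // (le_trans IH) ?lerDr.
by rewrite /weight big_setU1 //= lerD2l.
Qed.

End Weights.

Section ShortestPaths.
Variables (V E : finType) (src dst : E -> V) (R : realFieldType) (w : E -> R).
Hypothesis w_ge0 : forall e, 0 <= w e.
Local Notation walk := (walk src dst).

Lemma walk_st_path_le x y es : walk x y es ->
  exists P, [/\ st_path src dst x y P, P \subset [set h | h \in es]
              & weight w P <= \sum_(h <- es) w h].
Proof.
case/walk_shortcut=> es' sp sub.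
have sub' : [set h | h \in es'] \subset [set h | h \in es].
  by apply/subsetP=> h /[!inE] /sub.
exists [set h | h \in es']; split=> //; first by exists es'.
exact: le_trans (weight_subset w_ge0 sub') (weight_mem_seq_le w_ge0 es).
Qed.

Lemma shortest_path_subwalk_le s t u v A1 A2 A3 D :
  shortest_path src dst w s t [set h | h \in A1 ++ A2 ++ A3] -> uniq (A1 ++ A2 ++ A3) ->
  walk s u A1 -> walk v t A3 -> walk u v D ->
  \sum_(h <- A2) w h <= \sum_(h <- D) w h.
Proof.
move=> [_ shortest] uA wA1 wA3 wD.
have [P [stP _ leP]] := walk_st_path_le (walk_cat wA1 (walk_cat wD wA3)).
have := le_trans (shortest _ stP) leP.
by rewrite weight_mem_seq // !big_cat /= lerD2l lerD2r.
Qed.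

End ShortestPaths.

Section Exchange.
Variables (V E : finType) (src dst : E -> V) (R : realFieldType) (w : E -> R).
Hypothesis w_ge0 : forall e, 0 <= w e.
Local Notation walk := (walk src dst).

Variables (s t : V) (e : E) (a1 b1 a2 b2 q : seq E).
Hypotheses (P1_simple : simple_path_seq src dst s t (a1 ++ e :: b1))
           (P2_simple : simple_path_seq src dst s t (a2 ++ e :: b2))
           (q_simple : simple_path_seq src dst s t q)
           (q_shortest : shortest_path src dst w s t [set h | h \in q])
           (e_notin_q : e \notin q).

Let pre (i : bool) := if i then a1 else a2.
Let suf (j : bool) := if j then b1 else b2.
Let heads := [pred z | [exists i, z \in s :: map dst (pre i)]].
Let tails := [pred z | [exists j, z \in dst e :: map dst (suf j)]].

Lemma walk_pre i : walk s (src e) (pre i).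
Proof.
by case: i; [case/andP: P1_simple | case/andP: P2_simple] => /walk_cat_cons [].
Qed.

Lemma walk_suf j : walk (dst e) t (suf j).
Proof.
by case: j; [case/andP: P1_simple | case/andP: P2_simple] => /walk_cat_cons [].
Qed.

Lemma shortest_path_bridge : exists u v A1 A2 A3,
  [/\ q = A1 ++ A2 ++ A3, walk s u A1, walk u v A2 & walk v t A3] /\
  [/\ heads u, tails v & {in A2, forall h i j, h \notin pre i ++ suf j}].
Proof.
case/andP: q_simple => wq _.
have heads_s : heads s by apply/existsP; exists true; rewrite mem_head.
have tails_t : tails t by apply/existsP; exists true; apply: walk_mem_end (walk_suf _).
have [u [A1 [q' [-> wA1 wq' hu not_heads]]]] := walk_last_hit wq heads_s.
have [v [A2 [A3 [q'_eq wA2 wA3 tv not_tails]]]] := walk_first_hit wq' tails_t.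
exists u, v, A1, A2, A3; split; split; rewrite -?q'_eq // => h hA2 i j.
have hq' : h \in q' by rewrite q'_eq mem_cat hA2.
rewrite mem_cat negb_or; apply/andP; split.
- apply: contra _ (not_heads h hq') => hpre.
  by apply/existsP; exists i; rewrite inE map_f ?orbT.
- apply: contra _ (not_tails h hA2) => hsuf.
  by apply/existsP; exists j; apply: walk_mem_src (walk_suf j) hsuf.
Qed.

(* Uses simplicity: no link lies both before and after [e] on the same path. *)
Lemma mem_pre_suf_cross i j h :
  h \in pre i ++ suf j -> h \in pre (~~ i) ++ suf (~~ j) ->
  (h \in a1 ++ b1) && (h \in a2 ++ b2).
Proof.
have [_ /(_ h) disj1] := uniq_cat_cons (simple_path_uniq P1_simple).
have [_ /(_ h) disj2] := uniq_cat_cons (simple_path_uniq P2_simple).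
move: disj1 disj2; rewrite !mem_cat.
case: i j => [] [] /=; case: (h \in a1) (h \in b1) (h \in a2) (h \in b2) => [] [] [] [] //=.
all: by move/(_ isT).
Qed.

Lemma e_notin_pre_suf i j : e \notin pre i ++ suf j.
Proof.
have [e1 _] := uniq_cat_cons (simple_path_uniq P1_simple).
have [e2 _] := uniq_cat_cons (simple_path_uniq P2_simple).
move: e1 e2; rewrite !mem_cat.
by case: i j => [] [] /=; case: (e \in a1) (e \in b1) (e \in a2) (e \in b2) => [] [] [] [].
Qed.

Lemma critical_link_exchange_seq : exists Q1 Q2,
  [/\ st_path src dst s t Q1, st_path src dst s t Q2,
      weight w Q1 + weight w Q2 <=
        weight w [set h | h \in a1 ++ e :: b1] + weight w [set h | h \in a2 ++ e :: b2]
    & Q1 :&: Q2 \subset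
        ([set h | h \in a1 ++ e :: b1] :&: [set h | h \in a2 ++ e :: b2]) :\ e].
Proof.
have [u [v [A1 [A2 [A3 [[q_eq wA1 wA2 wA3] [/existsP [i ui] /existsP [j vj] A2_avoid]]]]]]] :=
  shortest_path_bridge.
have [c1 [c2 [pre_eq wc1 wc2]]] := walk_split_at (walk_pre i) ui.
have [d1 [d2 [suf_eq wd1 wd2]]] := walk_split_at (walk_suf j) vj.
have A2_le : \sum_(h <- A2) w h <= \sum_(h <- c2 ++ e :: d1) w h.
  move: q_shortest (simple_path_uniq q_simple); rewrite q_eq => q_short uq.
  apply: (shortest_path_subwalk_le w_ge0 q_short uq wA1 wA3).
  by apply: (walk_cat wc2); rewrite /= eqxx.
have [Q1 [stQ1 subQ1 leQ1]] := walk_st_path_le w_ge0 (walk_cat wc1 (walk_cat wA2 wd2)).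
have wQ2 : walk s t (pre (~~ i) ++ e :: suf (~~ j)).
  by apply: (walk_cat (walk_pre _)); rewrite /= eqxx walk_suf.
have [Q2 [stQ2 subQ2 leQ2]] := walk_st_path_le w_ge0 wQ2.
exists Q1, Q2; split=> //.
  have pre_sum : \sum_(h <- pre i) w h + \sum_(h <- pre (~~ i)) w h
                 = \sum_(h <- a1) w h + \sum_(h <- a2) w h by case: (i) => //; rewrite addrC.
  have suf_sum : \sum_(h <- suf j) w h + \sum_(h <- suf (~~ j)) w h
                 = \sum_(h <- b1) w h + \sum_(h <- b2) w h by case: (j) => //; rewrite addrC.
  rewrite !weight_mem_cat_cons ?(simple_path_uniq P1_simple) ?(simple_path_uniq P2_simple) //.
  rewrite pre_eq suf_eq !big_cat /= !big_cons in pre_sum suf_sum leQ1 leQ2 A2_le.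
  lra.
apply/subsetP=> h /setIP [/(subsetP subQ1) /[!in_set] h1 /(subsetP subQ2) /[!in_set] h2].
have e_notin_A2 : e \notin A2.
  by apply: contra e_notin_q; rewrite q_eq !mem_cat => ->; rewrite orbT.
have h_ij : h \in pre i ++ suf j.
  move: h1; rewrite pre_eq suf_eq !mem_cat => /or3P [->|hA2|->]; rewrite ?orbT //.
  have h_ne_e : h != e by apply: contraNneq e_notin_A2 => <-.
  case/negP: (A2_avoid h hA2 (~~ i) (~~ j)).
  by move: h2; rewrite mem_cat inE (negbTE h_ne_e) /= -mem_cat.
have h_ne_e : h != e by apply: contraNneq (e_notin_pre_suf i j) => <-.
have /andP [hP1 hP2] : (h \in a1 ++ b1) && (h \in a2 ++ b2).
  apply: mem_pre_suf_cross h_ij _.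
  by move: h2; rewrite !mem_cat inE (negbTE h_ne_e).
have widen a b : h \in a ++ b -> h \in a ++ e :: b.
  by rewrite !mem_cat inE => /orP [->|->]; rewrite ?orbT.
by rewrite in_set1 h_ne_e !widen.
Qed.

End Exchange.

Lemma critical_link_exchange (V E : finType) (src dst : E -> V) (R : realFieldType)
    (w : E -> R) (s t : V) (P1 P2 A : {set E}) (e : E) :
  (forall e, 0 <= w e) ->
  st_path src dst s t P1 -> st_path src dst s t P2 -> e \in P1 :&: P2 ->
  shortest_path src dst w s t A -> e \notin A ->
  exists Q1 Q2, [/\ st_path src dst s t Q1, st_path src dst s t Q2,
    weight w Q1 + weight w Q2 <= weight w P1 + weight w P2
    & Q1 :&: Q2 \subset (P1 :&: P2) :\ e].
Proof.
move=> w_ge0 [p1 [sp1 ->]] [p2 [sp2 ->]] /setIP []; rewrite !in_set => ep1 ep2 shA.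
have [[q [spq A_eq]] _] := shA; rewrite A_eq in_set in shA * => e_notin_q.
case/splitPr: ep1 sp1 => a1 b1 sp1; case/splitPr: ep2 sp2 => a2 b2 sp2.
exact: (critical_link_exchange_seq w_ge0 sp1 sp2 spq shA e_notin_q).
Qed.

Lemma surv_level_subset (E : finType) (R : realFieldType) (p : E -> R)
    (P1 P2 Q1 Q2 : {set E}) :
  (forall e, 0 <= p e <= 1) -> Q1 :&: Q2 \subset P1 :&: P2 ->
  surv_level p P1 P2 <= surv_level p Q1 Q2.
Proof.
move=> p01 sub; rewrite /surv_level (big_setID (Q1 :&: Q2)) /= (setIidPr sub).
have surv01 e : 0 <= 1 - p e <= 1 by have /andP [p0 p1] := p01 e; apply/andP; split; lra.
apply: ler_piMr; first by apply: prodr_ge0 => e _; case/andP: (surv01 e).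
by apply: prodr_ile1 => e _; apply: surv01.
Qed.

Lemma ctcsmq_optimal_exchange (V E : finType) (src dst : E -> V) (R : realFieldType)
    (p w : E -> R) (s t : V) (S : R) (P1 P2 Q1 Q2 : {set E}) :
  (forall e, 0 <= p e <= 1) -> ctcsmq_optimal src dst p w s t S P1 P2 ->
  st_path src dst s t Q1 -> st_path src dst s t Q2 ->
  weight w Q1 + weight w Q2 <= weight w P1 + weight w P2 ->
  Q1 :&: Q2 \subset P1 :&: P2 ->
  ctcsmq_optimal src dst p w s t S Q1 Q2.
Proof.
move=> p01 [[_ [_ survP]] minP] stQ1 stQ2 leQ sub; split.
  by split; [|split; [|exact: le_trans survP (surv_level_subset p01 sub)]].
by move=> Q1' Q2' /minP; apply: le_trans.
Qed.

Lemma exists_minimizer (I : finType) d (T : orderType d) (P : I -> Prop) (F : I -> T) :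
  (exists i, P i) -> exists2 i, P i & forall j, P j -> (F i <= F j)%O.
Proof.
case=> i0 /asboolP Pi0.
have [i /asboolP Pi minF] :=
  extremumP (P := fun i => `[< P i >]) F le_refl (@le_trans _ T) le_total Pi0.
by exists i => // j /asboolP /minF.
Qed.

Theorem corollary1 (R : realFieldType) (V E : finType) (src dst : E -> V)
  (p w : E -> R) (pmax : R) (s t : V) (S : R)
  (hp : forall e, 0 < p e /\ p e <= pmax) (hpmax : pmax < 1)
  (hw : forall e, 0 < w e)
  (hreach : exists A, st_path src dst s t A)
  (hS : (1 - pmax) ^+ #|E| <= S /\ S <= 1)
  (hfeas : exists P1 P2, feasible src dst p s t S P1 P2) :
  exists P1 P2 : {set E},
    ctcsmq_optimal src dst p w s t S P1 P2 /\
    (forall e, e \in P1 :&: P2 ->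
       forall A, shortest_path src dst w s t A -> e \in A).
Proof.
have p01 e : 0 <= p e <= 1.
  by have [p0 p_le] := hp e; rewrite ltW //= ltW // (le_lt_trans p_le hpmax).
have w_ge0 e : 0 <= w e by exact: ltW.
have [[P1 P2] feasP minP] : exists2 P : {set E} * {set E},
    feasible src dst p s t S P.1 P.2 & forall Q, feasible src dst p s t S Q.1 Q.2 ->
      weight w P.1 + weight w P.2 <= weight w Q.1 + weight w Q.2.
  apply: (exists_minimizer (fun P => weight w P.1 + weight w P.2)).
  by case: hfeas => P1 [P2 feasP]; exists (P1, P2).
have [[Q1 Q2] optQ minQ] : exists2 Q : {set E} * {set E},
    ctcsmq_optimal src dst p w s t S Q.1 Q.2 &
    forall Q', ctcsmq_optimal src dst p w s t S Q'.1 Q'.2 ->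
      (#|Q.1 :&: Q.2| <= #|Q'.1 :&: Q'.2|)%N.
  apply: (exists_minimizer (fun Q => #|Q.1 :&: Q.2|)).
  by exists (P1, P2); split=> // Q1 Q2 feasQ; apply: (minP (Q1, Q2)).
exists Q1, Q2; split=> // e eQ A shA; apply: contraT => e_notin_A.
have [[stQ1 [stQ2 _]] _] := optQ.
have [Q1' [Q2' [stQ1' stQ2' leQ' subQ']]] :=
  critical_link_exchange w_ge0 stQ1 stQ2 eQ shA e_notin_A.
have optQ' := ctcsmq_optimal_exchange p01 optQ stQ1' stQ2' leQ'
  (subset_trans subQ' (subD1set _ _)).
have := minQ (Q1', Q2') optQ'.
by rewrite leqNgt (proper_card (sub_proper_trans subQ' (properD1 eQ))).
Qed.
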